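(* Let $\boldsymbol{\lambda}=(\lambda,\mu,\nu^1,\dots,\nu^n)$ be a symmetric Schubert problem on $\mathrm{Gr}(m,\mathbb{C}^{2m})$. If \[ 2+\tfrac12\big(|\nu^1|+\dots+|\nu^n|+m-\ell(\lambda)-\ell(\mu)\big)\leq n, \] then \[ 2\leq\|\lambda\|+\|\mu\|+\|\nu^1\|+\dots+\|\nu^n\|-\tfrac12(m^2+m). \]
   Context: Partitions $\kappa$ satisfy $m\ge\kappa_1\ge\dots\ge\kappa_m\ge0$, $|\kappa|=\sum\kappa_i$, and $\ell(\kappa)=\max\{i:i\le\kappa_i\}$ is the number of boxes on the main diagonal of the Young diagram; $\kappa$ is symmetric if its Young diagram is symmetric about the main diagonal, and then $\|\kappa\|=\tfrac12(|\kappa|+\ell(\kappa))$. A symmetric Schubert problem on $\mathrm{Gr}(m,\mathbb{C}^{2m})$ is a list of nonempty symmetric partitions whose sizes sum to $m^2$, so here $|\lambda|+|\mu|+\sum_i|\nu^i|=m^2$. *)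

From mathcomp Require Import all_boot all_order all_algebra.
Set Implicit Arguments. Unset Strict Implicit. Unset Printing Implicit Defensive.
Import Order.TTheory GRing.Theory Num.Theory.

(* A partition kappa in the m x m box, represented as the sequence
   [:: kappa_1; ...; kappa_m] with m >= kappa_1 >= ... >= kappa_m >= 0. *)
Definition is_part (m : nat) (k : seq nat) : bool :=
  [&& size k == m, all (fun x => x <= m) k & sorted geq k].

(* kappa_i for 1 <= i <= m *)
Definition part_at (k : seq nat) (i : nat) : nat := nth 0 k i.-1.

Definition part_size (k : seq nat) : nat := sumn k.

Definition part_ell (m : nat) (k : seq nat) : nat :=
  \max_(i < m | i.+1 <= part_at k i.+1) i.+1.

Definition part_conj (m : nat) (k : seq nat) : seq nat :=
  [seq count (fun x => j <= x) k | j <- iota 1 m].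

Definition is_sym_part (m : nat) (k : seq nat) : bool :=
  is_part m k && (part_conj m k == k).

Definition part_norm (m : nat) (k : seq nat) : rat :=
  ((part_size k + part_ell m k)%:R / 2)%R.

Definition sym_schubert_problem (m : nat) (lam mu : seq nat) (nu : seq (seq nat)) : Prop :=
  [/\ all (is_sym_part m) (lam :: mu :: nu),
       all (fun k => 0 < part_size k)%N (lam :: mu :: nu)
     & (part_size lam + part_size mu + sumn (map part_size nu) = m ^ 2)%N].

From mathcomp Require Import all_boot all_order all_algebra.
From mathcomp Require Import lra.
Set Implicit Arguments. Unset Strict Implicit.
Import Order.TTheory GRing.Theory Num.Theory.

(* Every nonempty partition kappa has kappa_1 >= 1, hence ell(kappa) >= 1 and
   ||kappa|| = (|kappa| + ell(kappa)) / 2 >= 1.  Summing over the nu^i gives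
   ||nu^1|| + ... + ||nu^n|| >= n, and the hypothesis bounds n from below by
   exactly the amount needed once ||lambda|| and ||mu|| are expanded and
   m^2 is replaced by |lambda| + |mu| + sum |nu^i|. *)

Lemma sumn_le_size_head (x : nat) (s : seq nat) :
  sorted geq (x :: s) -> (sumn (x :: s) <= size (x :: s) * x)%N.
Proof.
move=> /(order_path_min (fun _ _ _ le_yx le_zy => leq_trans le_zy le_yx)).
rewrite mulSn leq_add2l; elim: s => //= y s IHs /andP [le_yx /IHs le_sx].
by rewrite mulSn leq_add.
Qed.

Lemma part_ell_gt0 (m : nat) (k : seq nat) :
  is_part m k -> (0 < part_size k)%N -> (0 < part_ell m k)%N.
Proof.
case/and3P=> /eqP size_k _; case: k size_k => [<- //|x k] size_k sorted_k pos_k.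
have x_gt0 : (0 < x)%N.
  rewrite lt0n; apply: contraTneq pos_k => x0.
  by have := sumn_le_size_head sorted_k; rewrite /part_size x0 muln0 leqn0 => /eqP ->.
rewrite /part_ell -size_k /=.
exact: (leq_trans _ (@leq_bigmax_cond _ _ (fun i : 'I_(size k).+1 => i.+1) ord0 _)).
Qed.

Lemma part_norm_ge1 (m : nat) (k : seq nat) :
  is_part m k -> (0 < part_size k)%N -> (1 <= part_norm m k :> rat)%R.
Proof.
move=> part_k pos_k; have ell_pos := part_ell_gt0 part_k pos_k.
rewrite /part_norm ler_pdivlMr // mul1r ler_nat.
by rewrite -addn1 leq_add.
Qed.

Lemma sum_part_norm_ge_size (m : nat) (nu : seq (seq nat)) :
  all (is_part m) nu -> all (fun k => 0 < part_size k)%N nu ->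
  ((size nu)%:R <= \sum_(k <- nu) part_norm m k :> rat)%R.
Proof.
elim: nu => [|k nu IHnu] /=; first by rewrite big_nil.
move=> /andP [part_k part_nu] /andP [pos_k pos_nu].
by rewrite big_cons -add1n natrD lerD ?part_norm_ge1 ?IHnu.
Qed.

Theorem lemma4p14 (m : nat) (lam mu : seq nat) (nu : seq (seq nat)) :
  sym_schubert_problem m lam mu nu ->
  (2 + ((sumn (map part_size nu))%:R + m%:R - (part_ell m lam)%:R
          - (part_ell m mu)%:R) / 2 <= (size nu)%:R :> rat)%R ->
  (2 <= part_norm m lam + part_norm m mu + \sum_(k <- nu) part_norm m k
          - (m ^ 2 + m)%:R / 2 :> rat)%R.
Proof.
case=> /= /and3P [_ _ sym_nu] /and3P [_ _ pos_nu] total_size hyp.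
have part_nu : all (is_part m) nu by apply: sub_all sym_nu => k /andP [].
have := sum_part_norm_ge_size part_nu pos_nu.
rewrite /part_norm -total_size !natrD.
lra.
Qed.
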